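(* On the two-letter alphabet $\{\mathtt A,\mathtt B\}$, there exists a $1$-regular word of length $n\ge 1$ if and only if $n=4k$ for some positive integer $k$. Moreover, in that case every $1$-regular word of length $4k$ over $\{\mathtt A,\mathtt B\}$ can be obtained from the word $\mathtt A^k\mathtt B^{2k}\mathtt A^k$ by a finite sequence of operations, each of which replaces a word of the form $x\,\mathtt{AB}\,y\,\mathtt{BA}\,z$ by $x\,\mathtt{BA}\,y\,\mathtt{AB}\,z$ (for some words $x,y,z$, possibly empty), with every intermediate word being $1$-regular.
   Context: For a word $u=u_1\cdots u_m$ over an alphabet $\mathcal A$ with $b$ letters and an integer $r\ge -1$, $u$ is $r$-regular if for every $k=0,1,\dots,r$ the sum $\sum_{1\le t\le m,\ u_t=c} t^k$ is the same for all letters $c\in\mathcal A$ (a letter not occurring contributes $0$). Here $\mathcal A=\{\mathtt A,\mathtt B\}$, and $\mathtt A^k$ denotes $k$ consecutive copies of $\mathtt A$. *)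

From HB Require Import structures.
From mathcomp Require Import all_boot.
Set Implicit Arguments. Unset Strict Implicit. Unset Printing Implicit Defensive.

Inductive letter := LA | LB.

Definition letter_eqb (a b : letter) : bool :=
  match a, b with LA, LA | LB, LB => true | _, _ => false end.
Lemma letter_eqP : Equality.axiom letter_eqb.
Proof. by case; case; constructor. Qed.
HB.instance Definition _ := hasDecEq.Build letter letter_eqP.

Definition word := seq letter.

Definition psum (u : word) (c : letter) (k : nat) : nat :=
  \sum_(t < size u | nth LA u t == c) (t.+1) ^ k.

Definition regular (r : nat) (u : word) : Prop :=
  forall k, k <= r -> forall c d : letter, psum u c k = psum u d k.

Definition swap_step (u v : word) : Prop :=
  exists x y z : word,
    u = x ++ [:: LA; LB] ++ y ++ [:: LB; LA] ++ z /\
    v = x ++ [:: LB; LA] ++ y ++ [:: LA; LB] ++ z.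

Inductive reach_reg1 : word -> word -> Prop :=
| rr_refl u : regular 1 u -> reach_reg1 u u
| rr_step u v w : regular 1 u -> swap_step u v -> reach_reg1 v w -> reach_reg1 u w.

Definition base_word (k : nat) : word := nseq k LA ++ nseq (2 * k) LB ++ nseq k LA.

From mathcomp Require Import all_boot.
From mathcomp Require Import zify.

(* A word u over {A, B} is 1-regular iff both letters occur
   equally often and the sums of their positions agree.  We compute these
   statistics ([occ], [sp], and the second moment [sq]) by recursion on the
   word and record how they behave under concatenation and on blocks A^m.
   - Length: with m letters of each kind, the positions sum to 2m(2m+1)/2,
     so each letter's position sum is m(2m+1)/2, forcing m even, n = 4k.
   - Reachability: a move x AB y BA z -> x BA y AB z preserves [occ] and
     [sp] (hence 1-regularity) and strictly increases [sq] of the letter B.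
     A word which is not the result of a move has the shape A^r B^b A^s or
     A^r B^b A B^e A^s (b, e > 0); the only 1-regular such word of length
     4k is A^k B^2k A^k.  So every 1-regular word other than the base word
     arises by a move from a 1-regular word with smaller [sq], and induction
     on [sq] builds the required sequence of moves. *)

(* For a letter c, [occ c u] counts its occurrences
   in u, [sp c u] sums its (1-based) positions and [sq c u] sums the squares
   of its positions.  The sums are defined by structural recursion:
   prepending a letter shifts every later position by one. *)
Fixpoint occ (c : letter) (u : word) : nat :=
  if u is x :: u' then (x == c) + occ c u' else 0.

Fixpoint sp (c : letter) (u : word) : nat :=
  if u is x :: u' then (x == c) + sp c u' + occ c u' else 0.

Fixpoint sq (c : letter) (u : word) : nat :=
  if u is x :: u' then (x == c) + sq c u' + 2 * sp c u' + occ c u'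
  else 0.

Lemma psum_cons (F : nat -> nat) (x : letter) (u : word) (c : letter) :
  \sum_(t < (size u).+1 | nth LA (x :: u) t == c) F t =
  (x == c) * F 0 + \sum_(t < size u | nth LA u t == c) F t.+1.
Proof.
rewrite big_mkcond big_ord_recl /= [in RHS]big_mkcond /=.
by case: (x == c); rewrite ?mul1n ?mul0n.
Qed.

Lemma psum0E (u : word) (c : letter) : psum u c 0 = occ c u.
Proof.
rewrite /psum; elim: u => [|x u IH]; first by rewrite big_ord0.
by rewrite (psum_cons (fun t => t.+1 ^ 0)) /= IH expn0 muln1.
Qed.

(* Sum of the positions of c, all shifted by [off]; the generalization over
   [off] makes the induction on u go through. *)
Lemma psum_shift (u : word) (c : letter) (off : nat) :
  \sum_(t < size u | nth LA u t == c) (t.+1 + off) = sp c u + off * occ c u.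
Proof.
elim: u off => [|x u IH] off; first by rewrite big_ord0 muln0.
rewrite (psum_cons (fun t => t.+1 + off)) /=.
under eq_bigr do rewrite addSnnS.
by rewrite IH; case: (x == c) => /=; lia.
Qed.

Lemma psum1E (u : word) (c : letter) : psum u c 1 = sp c u.
Proof.
have := psum_shift u c 0; rewrite mul0n addn0 => <-.
by apply: eq_bigr => i _; rewrite expn1 addn0.
Qed.

Definition balanced (u : word) : Prop :=
  occ LA u = occ LB u /\ sp LA u = sp LB u.

Lemma regular1P (u : word) : regular 1 u <-> balanced u.
Proof.
split=> [reg_u | [occE spE]].
  by split; rewrite -?psum0E -?psum1E; apply: reg_u.
by case=> [|[|//]] _ [] []; rewrite ?psum0E ?psum1E.
Qed.

(* Behaviour of the statistics under concatenation: positions in the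
   second factor are shifted by the length of the first. *)
Lemma occ_cat (c : letter) (x y : word) : occ c (x ++ y) = occ c x + occ c y.
Proof. by elim: x => [|a x IH] /=; lia. Qed.

Lemma sp_cat (c : letter) (x y : word) :
  sp c (x ++ y) = sp c x + sp c y + size x * occ c y.
Proof. by elim: x => [|a x IH] /=; [lia | rewrite IH occ_cat; lia]. Qed.

Lemma sq_cat (c : letter) (x y : word) :
  sq c (x ++ y) =
  sq c x + sq c y + 2 * size x * sp c y + size x * size x * occ c y.
Proof. by elim: x => [|a x IH] /=; [lia | rewrite IH sp_cat occ_cat; nia]. Qed.

Lemma occ_nseq (c a : letter) (m : nat) : occ c (nseq m a) = (a == c) * m.
Proof.
by elim: m => [|m IH] /=; [rewrite muln0 | rewrite IH; case: (a == c)].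
Qed.

Lemma sp_nseq (c a : letter) (m : nat) :
  2 * sp c (nseq m a) = (a == c) * (m * m.+1).
Proof.
elim: m => [|m IH] /=; first by case: (a == c).
by rewrite occ_nseq; move: IH; case: (a == c) => /= IH; nia.
Qed.

Lemma sp_nseq_other (c a : letter) (m : nat) : a != c -> sp c (nseq m a) = 0.
Proof. by move=> /negbTE ac; have := sp_nseq c a m; rewrite ac /=; lia. Qed.

Lemma occ_letters (u : word) : occ LA u + occ LB u = size u.
Proof. by elim: u => //= a u; case: a => /=; lia. Qed.

Lemma sp_letters (u : word) : 2 * (sp LA u + sp LB u) = size u * (size u).+1.
Proof. by elim: u => //= a u IH; have := occ_letters u; case: a => /=; nia. Qed.

(* A move AB..BA -> BA..AB keeps the length, the letter counts and the
   position sums: each letter gains one position and loses one. *)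
Lemma swap_step_invariant (c : letter) {u v : word} : swap_step u v ->
  [/\ size u = size v, occ c u = occ c v & sp c u = sp c v].
Proof.
move=> [x [y [z [-> ->]]]].
by rewrite !sp_cat !occ_cat !size_cat /=; split; case: c => /=; lia.
Qed.

(* A move strictly increases the second moment of the B-positions: the B
   at position p+1 moves to p and the one at q > p+1 moves to q+1.  This is
   the measure that makes the reduction to the base word terminate. *)
Lemma swap_step_sq {u v : word} : swap_step u v -> sq LB u < sq LB v.
Proof.
by move=> [x [y [z [-> ->]]]]; rewrite !sq_cat !sp_cat !occ_cat ?size_cat /=; nia.
Qed.

Lemma swap_step_balanced {u v : word} :
  swap_step u v -> balanced u <-> balanced v.
Proof.
move=> uv; have [_ occA spA] := swap_step_invariant LA uv.
have [_ occB spB] := swap_step_invariant LB uv.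
by rewrite /balanced occA spA occB spB.
Qed.

Lemma nseq_prefix {T : eqType} (c : T) (w : seq T) :
  w = nseq (size w) c \/ exists i x w', x != c /\ w = nseq i c ++ x :: w'.
Proof.
elim: w => [|y w IH]; first by left.
have [-> | yc] := eqVneq y c; last by right; exists 0, y, w.
case: IH => [E | [i [x [w' [xc E]]]]]; first by left; rewrite /= -E.
by right; exists i.+1, x, w'; rewrite E.
Qed.

Lemma nseq_suffix {T : eqType} (c : T) (w : seq T) :
  w = nseq (size w) c \/ exists i x w', x != c /\ w = w' ++ x :: nseq i c.
Proof.
case: (nseq_prefix c (rev w)) => [E | [i [x [w' [xc E]]]]].
  by left; rewrite -[w]revK E rev_nseq size_rev size_nseq.
right; exists i, x, (rev w'); split=> //.
by rewrite -[w]revK E rev_cat rev_nseq rev_cons cat_rcons.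
Qed.

Lemma cons_nseq {T : Type} (x : T) (i : nat) (t : seq T) :
  x :: nseq i x ++ t = nseq i x ++ x :: t.
Proof. by elim: i => //= i ->. Qed.

(* Combinatorial trichotomy: a word either is the result of a move, or
   contains no factor BA followed later by AB; the latter words are exactly
   those of shape A^r B^b A^s or A^r B^b A B^e A^s with b, e > 0. *)
Lemma word_shape (u : word) :
  [\/ exists v, swap_step v u,
      exists r b s, u = nseq r LA ++ nseq b LB ++ nseq s LA
    | exists r b e s, [/\ 0 < b, 0 < e &
        u = nseq r LA ++ nseq b LB ++ [:: LA] ++ nseq e LB ++ nseq s LA]].
Proof.
have [Eu | [r [[] [w1 [//= _ ->]]]]] := nseq_prefix LA u.
  by apply: Or32; exists (size u), 0, 0; rewrite /= cats0.
have [E1 | [s [[] [w2 [//= _ ->]]]]] := nseq_suffix LA w1.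
  by apply: Or32; exists r, 1, (size w1); rewrite {1}E1.
have [E2 | [i [[] [w3 [//= _ ->]]]]] := nseq_prefix LB w2.
  by apply: Or32; exists r, (size w2).+2, s; rewrite {1}E2 /= -cons_nseq.
have [E3 | [j [[] [w4 [//= _ ->]]]]] := nseq_suffix LB w3.
  apply: Or33; exists r, i.+1, (size w3).+1, s; split=> //.
  by rewrite {1}E3 /= -[(_ ++ _) ++ _]catA /= -cons_nseq.
apply: Or31; exists ((nseq r LA ++ nseq i LB) ++ [:: LA; LB] ++ w4 ++
                     [:: LB; LA] ++ nseq j LB ++ nseq s LA).
exists (nseq r LA ++ nseq i LB), w4, (nseq j LB ++ nseq s LA); split=> //.
by rewrite -!catA /= cons_nseq -[(w4 ++ _) ++ _]catA /= cons_nseq.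
Qed.

(* The 1-regular block words A^r B^b A^s are the base words (the converse
   is [base_word_balanced]): balancing the counts gives b = r + s, and then
   balancing the position sums reduces to r^2 = s^2. *)
Lemma balanced_blocks (r b s : nat) :
  balanced (nseq r LA ++ nseq b LB ++ nseq s LA) -> s = r /\ b = 2 * r.
Proof.
rewrite /balanced !(sp_cat, occ_cat, size_cat, size_nseq, occ_nseq).
rewrite !(sp_nseq_other LA LB) // !(sp_nseq_other LB LA) //=.
have := sp_nseq LA LA r; have := sp_nseq LA LA s; have := sp_nseq LB LB b => /=.
move=> spB spAs spAr [occE spE].
have sqE : s * s = r * r by lia.
have rs : s = r.
  by apply/eqP; rewrite -(@eqn_exp2r s r 2) // !expnS expn0 !muln1 sqE.
by split=> //; lia.
Qed.

Lemma base_word_balanced (k : nat) : balanced (base_word k).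
Proof.
rewrite /balanced /base_word !(sp_cat, occ_cat, size_cat, size_nseq, occ_nseq).
rewrite !(sp_nseq_other LA LB) // !(sp_nseq_other LB LA) //=.
have := sp_nseq LA LA k; have := sp_nseq LB LB (2 * k) => /=.
by split; lia.
Qed.

Lemma size_base_word (k : nat) : size (base_word k) = 4 * k.
Proof. by rewrite /base_word !size_cat !size_nseq; lia. Qed.

(* With m = b + e
   the balance conditions give (s + 1 - r) * m = 2 * e, where 0 < 2e < 2m
   forces s = r and m = 2e, contradicting m = r + s + 1. *)
Lemma not_balanced_blocks (r b e s : nat) : 0 < b -> 0 < e ->
  ~ balanced (nseq r LA ++ nseq b LB ++ [:: LA] ++ nseq e LB ++ nseq s LA).
Proof.
move=> b_gt0 e_gt0.
rewrite /balanced !(sp_cat, occ_cat, size_cat, size_nseq, occ_nseq).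
rewrite !(sp_nseq_other LA LB) // !(sp_nseq_other LB LA) //=.
have := sp_nseq LA LA r; have := sp_nseq LA LA s; have := sp_nseq LB LB b;
have := sp_nseq LB LB e => /=.
move=> spBe spBb spAs spAr [occE spE].
have key : (s + 1) * (b + e) = r * (b + e) + 2 * e by lia.
case: (ltngtP s r) => [sr | rs | sr]; last by lia.
- have : (s + 1) * (b + e) <= r * (b + e).
    by rewrite leq_mul2r; apply/orP; right; lia.
  lia.
- have : (r + 2) * (b + e) <= (s + 1) * (b + e).
    by rewrite leq_mul2r; apply/orP; right; lia.
  lia.
Qed.

Lemma balanced_predecessor {k : nat} {u : word} :
  size u = 4 * k -> balanced u -> u = base_word k \/ exists v, swap_step v u.
Proof.
move=> size_u bal_u.
case: (word_shape u) =>
  [pred_u | [r [b [s Eu]]] | [r [b [e [s [b_gt0 e_gt0 Eu]]]]]].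
- by right.
- move: bal_u size_u; rewrite Eu => /balanced_blocks [-> ->].
  rewrite !size_cat !size_nseq => size_u.
  by left; rewrite /base_word; have -> : r = k by lia.
- by case: (not_balanced_blocks r b e s b_gt0 e_gt0); rewrite -Eu.
Qed.

Lemma reach_reg1_snoc {u v w : word} :
  reach_reg1 u v -> swap_step v w -> reach_reg1 u w.
Proof.
elim=> [x reg_x | x y z reg_x xy _ IH] zw; last exact: rr_step reg_x xy (IH zw).
have reg_w : regular 1 w.
  by apply/regular1P; rewrite -(swap_step_balanced zw); apply/regular1P.
exact: rr_step reg_x zw (rr_refl reg_w).
Qed.

Lemma reach_from_base (k : nat) (u : word) :
  size u = 4 * k -> balanced u -> reach_reg1 (base_word k) u.
Proof.
have [n] := ubnP (sq LB u); elim: n u => // n IH u sq_u size_u bal_u.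
case: (balanced_predecessor size_u bal_u) => [Eu | [v vu]].
  by rewrite -Eu; apply/rr_refl/regular1P.
have [size_v _ _] := swap_step_invariant LA vu.
have reach_v : reach_reg1 (base_word k) v.
  apply: IH.
  - by have := swap_step_sq vu; lia.
  - by rewrite size_v.
  - by rewrite (swap_step_balanced vu).
exact: reach_reg1_snoc reach_v vu.
Qed.

(* A 1-regular word has length divisible by 4: with m occurrences of each
   letter the length is 2m and each position sum is m(2m+1)/2, so m is
   even. *)
Lemma balanced_size (u : word) : balanced u -> exists k, size u = 4 * k.
Proof.
move=> [occE spE]; have := occ_letters u; have := sp_letters u.
set m := occ LA u => sp_size occ_size.
have spA : 2 * sp LA u = m * (2 * m + 1) by nia.
by exists (sp LA u - m * m); lia.
Qed.

Theorem mainTheorem7 :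
  (forall n : nat, 1 <= n ->
     ((exists u : word, size u = n /\ regular 1 u) <->
      (exists k : nat, 0 < k /\ n = 4 * k)))
  /\
  (forall (k : nat) (u : word), 0 < k -> size u = 4 * k -> regular 1 u ->
     reach_reg1 (base_word k) u).
Proof.
split.
- move=> n n_gt0; split.
  + move=> [u [size_u /regular1P /balanced_size [k size_k]]].
    by exists k; split; lia.
  + move=> [k [_ ->]]; exists (base_word k); split; first exact: size_base_word.
    exact/regular1P/base_word_balanced.
- by move=> k u _ size_u /regular1P; apply: reach_from_base.
Qed.
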